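(* Assume $b_1<n^*$ and $b_2<m^*$. Then: (1) The equilibrium payoffs of both players are the same in all Nash equilibria of $\Gamma(b_1,b_2)$, and for every Nash equilibrium $(\sigma^{1*},\sigma^{2*})$, $$\frac{b_1b_2}{n^*}\le U_1(\sigma^{1*},\sigma^{2*})\le\min\Bigl\{\frac{b_1b_2}{m^*},b_2\Bigr\},\qquad \max\Bigl\{0,b_2\Bigl(1-\frac{b_1}{m^*}\Bigr)\Bigr\}\le U_2(\sigma^{1*},\sigma^{2*})\le b_2\Bigl(1-\frac{b_1}{n^*}\Bigr).$$ (2) The expected detection rate $r(\sigma^* )$ takes the same value in all Nash equilibria $\sigma^*$ of $\Gamma(b_1,b_2)$, and $\frac{b_1}{n^*}\le r(\sigma^* )\le\min\{\frac{b_1}{m^*},1\}$.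
   Context: Detection model: finite nonempty sets $\mathcal V$, $\mathcal E$, monitoring sets $\mathcal C_i\subseteq\mathcal E$ ($i\in\mathcal V$) with every $e\in\mathcal E$ in some $\mathcal C_i$; $\mathcal C_S=\bigcup_{i\in S}\mathcal C_i$; $F(S,T)=|\mathcal C_S\cap T|$. Set cover: $S\subseteq\mathcal V$ with $\mathcal C_S=\mathcal E$; $n^*$ = minimum size of a set cover. Set packing: $T\subseteq\mathcal E$ with $|\mathcal C_i\cap T|\le1$ for all $i$; $m^*$ = maximum size of a set packing. Game $\Gamma(b_1,b_2)$ ($b_1,b_2$ positive integers): $\mathcal A_1=\{S\subseteq\mathcal V:|S|\le b_1\}$, $\mathcal A_2=\{T\subseteq\mathcal E:|T|\le b_2\}$; mixed strategies $\sigma^1\in\Delta(\mathcal A_1)$, $\sigma^2\in\Delta(\mathcal A_2)$ (independent); payoffs $U_1=\mathbb E[F(S,T)]$, $U_2=\mathbb E[|T|]-\mathbb E[F(S,T)]$; Nash equilibrium in mixed strategies as usual. The expected detection rate of a profile $\sigma=(\sigma^1,\sigma^2)$ whose attack strategy is supported on nonempty sets is $r(\sigma)=\mathbb E_{S\sim\sigma^1,T\sim\sigma^2}\bigl[F(S,T)/|T|\bigr]$ (in the equilibria considered here all attack plans in the support have size $b_2$). *)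

From HB Require Import structures.
From mathcomp Require Import all_boot all_order all_algebra.
Set Implicit Arguments. Unset Strict Implicit. Unset Printing Implicit Defensive.
Import Order.TTheory GRing.Theory Num.Theory.
Local Open Scope ring_scope.

Section Detection.
Variables (V E : finType) (C : V -> {set E}).

Definition coverset (S : {set V}) : {set E} := \bigcup_(i in S) C i.
Definition Fdet (S : {set V}) (T : {set E}) : nat := #|coverset S :&: T|.

Definition is_set_cover (S : {set V}) : bool := coverset S == [set: E].
Definition is_set_packing (T : {set E}) : bool :=
  [forall i, #|C i :&: T| <= 1]%N.

(* n* : minimum size of a set cover (the default #|V| is never the value
   when every edge is monitored, since [set: V] is then a cover) *)
Definition nstar : nat :=
  \big[minn/#|V|]_(S : {set V} | is_set_cover S) #|S|.
Definition mstar : nat := \max_(T : {set E} | is_set_packing T) #|T|.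

Variable R : realFieldType.

Definition mixed1 (b1 : nat) (s : {ffun {set V} -> R}) : Prop :=
  [/\ forall S : {set V}, 0 <= s S,
      \sum_(S : {set V}) s S = 1 &
      forall S : {set V}, (b1 < #|S|)%N -> s S = 0].
Definition mixed2 (b2 : nat) (s : {ffun {set E} -> R}) : Prop :=
  [/\ forall T : {set E}, 0 <= s T,
      \sum_(T : {set E}) s T = 1 &
      forall T : {set E}, (b2 < #|T|)%N -> s T = 0].

Definition U1 (s1 : {ffun {set V} -> R}) (s2 : {ffun {set E} -> R}) : R :=
  \sum_(S : {set V}) \sum_(T : {set E}) s1 S * s2 T * (Fdet S T)%:R.
Definition U2 (s1 : {ffun {set V} -> R}) (s2 : {ffun {set E} -> R}) : R :=
  \sum_(S : {set V}) \sum_(T : {set E}) s1 S * s2 T * ((#|T|)%:R - (Fdet S T)%:R).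

(* expected detection rate; uses MathComp's convention x / 0 = 0, which is
   irrelevant when the attack strategy is supported on nonempty sets *)
Definition detection_rate (s1 : {ffun {set V} -> R}) (s2 : {ffun {set E} -> R}) : R :=
  \sum_(S : {set V}) \sum_(T : {set E}) s1 S * s2 T * ((Fdet S T)%:R / (#|T|)%:R).

Definition is_NE (b1 b2 : nat) (s1 : {ffun {set V} -> R}) (s2 : {ffun {set E} -> R}) : Prop :=
  [/\ mixed1 b1 s1, mixed2 b2 s2,
      (forall t1, mixed1 b1 t1 -> U1 t1 s2 <= U1 s1 s2) &
      (forall t2, mixed2 b2 t2 -> U2 s1 t2 <= U2 s1 s2)].

End Detection.

From HB Require Import structures.
From mathcomp Require Import all_boot all_order all_algebra.
From mathcomp Require Import ring lra zify.
Set Implicit Arguments. Unset Strict Implicit. Unset Printing Implicit Defensive.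
Import Order.TTheory GRing.Theory Num.Theory.
Local Open Scope ring_scope.

(* Since U1 + U2 = E|T| depends on the attack alone, equilibria are
   interchangeable for the attacker and give it the same payoff. When
   b1 < n* and b2 < m*, every attack plan played in equilibrium uses its full
   budget b2, so E|T| = b2 fixes U1 as well and the detection rate is U1 / b2.
   The bounds come from averaging: the defender can watch the b1 most loaded
   vertices of a minimum cover, and the attacker can hit the b2 least watched
   edges of a maximum packing. *)

Section Probability.
Variables (R : realFieldType) (I : finType) (s : I -> R).
Hypotheses (s_ge0 : forall i, 0 <= s i) (s_sum1 : \sum_i s i = 1).

Lemma prob_ge0 (P : pred I) : 0 <= \sum_(i | P i) s i.
Proof. exact: sumr_ge0. Qed.

Lemma prob_le1 (P : pred I) : \sum_(i | P i) s i <= 1.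
Proof.
rewrite -s_sum1 [X in _ <= X](bigID P) /= lerDl.
exact: sumr_ge0.
Qed.

Lemma prob_lt1 (P : pred I) i0 : s i0 != 0 -> ~~ P i0 -> \sum_(i | P i) s i < 1.
Proof.
move=> si0 Pi0; rewrite -s_sum1 [X in _ < X](bigID P) /= ltrDl.
rewrite (bigD1 i0) //= ltr_pwDl ?sumr_ge0 //.
by rewrite lt0r si0 s_ge0.
Qed.

Lemma prob_eq1 (P : pred I) : (forall i, s i != 0 -> P i) -> \sum_(i | P i) s i = 1.
Proof.
move=> supP; rewrite -s_sum1 [RHS](bigID P) /= [X in _ + X]big1 ?addr0 // => i Pi.
by apply/eqP; apply: contraNT Pi => /supP.
Qed.

Lemma support_exists : exists i, s i != 0.
Proof.
case: (pickP (fun i => s i != 0)) => [i si|s0]; first by exists i.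
move: s_sum1; rewrite big1 => [/eqP|i _]; first by rewrite eq_sym oner_eq0.
exact/eqP/negbFE/s0.
Qed.

Lemma expect_const_support (f : I -> R) M :
  (forall i, s i != 0 -> f i = M) -> \sum_i s i * f i = M.
Proof.
move=> fM; rewrite -[RHS]mul1r -s_sum1 big_distrl /=; apply: eq_bigr => i _.
by have [->|/fM ->] := eqVneq (s i) 0; rewrite ?mul0r.
Qed.

Lemma expect_le_support (f : I -> R) M :
  (forall i, s i != 0 -> f i <= M) -> \sum_i s i * f i <= M.
Proof.
move=> fM; rewrite -[X in _ <= X]mul1r -s_sum1 big_distrl /=; apply: ler_sum => i _.
by have [->|/fM] := eqVneq (s i) 0; rewrite ?mul0r // => /ler_wpM2l; apply.
Qed.

Lemma expect_max_support (f : I -> R) M :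
  (forall i, s i != 0 -> f i <= M) -> \sum_i s i * f i = M ->
  forall i, s i != 0 -> f i = M.
Proof.
move=> fM sfM i si.
have gap_ge0 j : true -> 0 <= s j * (M - f j).
  by have [->|/fM fjM] := eqVneq (s j) 0; rewrite ?mul0r // mulr_ge0 ?subr_ge0.
have gap0 : \sum_j s j * (M - f j) = 0.
  under eq_bigr do rewrite mulrBr.
  by rewrite sumrB -big_distrl /= s_sum1 mul1r sfM subrr.
have /eqP := psumr_eq0P gap_ge0 gap0 (i := i) isT.
by rewrite mulf_eq0 (negbTE si) subr_eq0 => /eqP.
Qed.

End Probability.

(* [mixed2] is definitionally [mixed1] on edge sets, so the lemmas of this
   section serve both players. *)
Section PureStrategies.
Variables (R : realFieldType) (X : finType).
Implicit Types (A : {set X}) (s : {ffun {set X} -> R}).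

Definition dirac A0 : {ffun {set X} -> R} := [ffun A => (A == A0)%:R].

Lemma expect_dirac A0 (f : {set X} -> R) : \sum_A dirac A0 A * f A = f A0.
Proof.
rewrite (bigD1 A0) //= ffunE eqxx mul1r big1 ?addr0 // => A /negbTE nA.
by rewrite ffunE nA mul0r.
Qed.

Lemma mixed_dirac b A0 : (#|A0| <= b)%N -> mixed1 b (dirac A0).
Proof.
move=> A0b; split=> [A||A].
- by rewrite ffunE ler0n.
- rewrite (bigD1 A0) //= ffunE eqxx big1 ?addr0 // => A /negbTE nA.
  by rewrite ffunE nA.
- by rewrite ffunE; case: eqP => // ->; rewrite ltnNge A0b.
Qed.

Lemma mixed_support_card b s A : mixed1 b s -> s A != 0 -> (#|A| <= b)%N.
Proof. by case=> _ _ sb; apply: contraNT; rewrite -ltnNge => /sb ->. Qed.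

End PureStrategies.

Section DoubleCounting.
Variables (R : realFieldType) (I J : finType).

Lemma sum_mul_card_setI (w : I -> R) (A : I -> {set J}) (B : {set J}) :
  \sum_i w i * #|B :&: A i|%:R = \sum_(j in B) \sum_(i | j \in A i) w i.
Proof.
under eq_bigr do rewrite -sum1_card natr_sum big_distrr /= big_mkcond.
rewrite exchange_big [RHS]big_mkcond; apply: eq_bigr => j _ /=.
case jB: (j \in B); last by rewrite big1 // => i _; rewrite inE jB.
by rewrite [RHS]big_mkcond; apply: eq_bigr => i _; rewrite inE jB mulr1.
Qed.

End DoubleCounting.

Section SubsetSums.
Variables (R : realFieldType) (X : finType) (x : X -> R).

Lemma sum_subset_le (A B : {set X}) : (forall i, 0 <= x i) -> A \subset B ->
  \sum_(i in A) x i <= \sum_(i in B) x i.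
Proof.
by move=> x_ge0 AB; rewrite [X in _ <= X](big_setID A) /= (setIidPr AB) lerDl sumr_ge0.
Qed.

Lemma subset_average_ge b (A : {set X}) : (b <= #|A|)%N ->
  exists B : {set X}, [/\ B \subset A, #|B| = b &
    b%:R * \sum_(i in A) x i <= #|A|%:R * \sum_(i in B) x i].
Proof.
(* Drop a lightest element and recurse. *)
have [->|b_gt0] := posnP b.
  by exists set0; rewrite sub0set cards0 big_set0 mul0r mulr0.
have [n] := ubnP (#|A| - b); elim: n A => // n IH A An bA.
have [->|nbA] := eqVneq b #|A|; first by exists A.
have [a0 a0A] : exists a0, a0 \in A.
  by apply/set0Pn; rewrite -card_gt0 (leq_trans b_gt0).
have [a aA amin] := arg_minP x a0A; have {}aA : a \in A by [].
have cardA : #|A| = #|A :\ a|.+1 by rewrite (cardsD1 a A) aA.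
have [||B [BA cardB hB]] := IH (A :\ a); [lia | lia |].
exists B; split => //; first exact: subset_trans BA (subD1set A a).
rewrite (big_setD1 a aA) /= cardA -natr1.
have m_gt0 : 0 < #|A :\ a|%:R :> R by rewrite ltr0n; lia.
have rest_ge : #|A :\ a|%:R * x a <= \sum_(i in A :\ a) x i.
  rewrite mulr_natl -sumr_const; apply: ler_sum => i.
  by rewrite inE => /andP[_ /amin].
have SB_ge : b%:R * x a <= \sum_(i in B) x i.
  rewrite -(ler_pM2l m_gt0); apply: le_trans hB.
  by rewrite mulrCA ler_wpM2l ?ler0n.
move: rest_ge SB_ge hB; set m := #|A :\ a|%:R; lra.
Qed.

End SubsetSums.

Section CoversAndPackings.
Variables (V E : finType) (C : V -> {set E}).
Implicit Types (S K : {set V}) (P : {set E}).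

Lemma coverset_sub S1 S2 : S1 \subset S2 -> coverset C S1 \subset coverset C S2.
Proof. by move=> S12; apply/bigcupsP => i /(subsetP S12) iS2; apply: bigcup_sup. Qed.

Lemma nstar_le_cover S : is_set_cover C S -> (nstar C <= #|S|)%N.
Proof.
by move=> coverS; rewrite /nstar -minEnat; exact: (bigmin_le_cond _ (fun S0 => #|S0|) coverS).
Qed.

Lemma nstar_attained : (forall e, exists i, e \in C i) ->
  exists2 K, is_set_cover C K & #|K| = nstar C.
Proof.
move=> hcov; apply: (big_ind (fun n => exists2 K, is_set_cover C K & #|K| = n)).
- exists [set: V]; last exact: cardsT.
  rewrite /is_set_cover eqEsubset subsetT; apply/subsetP => e _.
  by have [i ei] := hcov e; apply/bigcupP; exists i.
- move=> m n [K1 coverK1 <-] [K2 coverK2 <-].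
  by rewrite /minn; case: ltnP; [exists K1 | exists K2].
- by move=> S coverS; exists S.
Qed.

Lemma mstar_attained : exists2 P, is_set_packing C P & #|P| = mstar C.
Proof.
have [|P packP maxP] := eq_bigmax_cond (fun P : {set E} => #|P|) (A := is_set_packing C).
  by apply/card_gt0P; exists set0; apply/forallP => i; rewrite setI0 cards0.
by exists P; last exact: esym maxP.
Qed.

Lemma exists_uncovered S : (#|S| < nstar C)%N -> exists e, e \notin coverset C S.
Proof.
move=> Sn; apply/existsP; rewrite -negb_forall; apply: contraL Sn => /forallP covered.
rewrite -leqNgt nstar_le_cover // /is_set_cover eqEsubset subsetT.
by apply/subsetP => e _; apply: covered.
Qed.

Lemma cover_choice K : is_set_cover C K ->
  exists f : E -> V, forall e, f e \in K /\ e \in C (f e).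
Proof.
move=> /eqP coverK.
apply: (@fin_all_exists _ (fun=> V) (fun e i => i \in K /\ e \in C i)) => e.
have : e \in coverset C K by rewrite coverK inE.
by case/bigcupP => i iK ei; exists i.
Qed.

Lemma card_coverset_packing S P : is_set_packing C P ->
  (#|coverset C S :&: P| <= #|S|)%N.
Proof.
move=> /forallP packP; rewrite -sum1_card.
apply: (@leq_trans (\sum_(e in coverset C S :&: P) \sum_(i in S) (e \in C i))).
  apply: leq_sum => e; rewrite inE => /andP[/bigcupP[i iS ei] _].
  by rewrite (bigD1 i) //= ei.
rewrite exchange_big -sum1_card; apply: leq_sum => i _.
apply: (leq_trans _ (packP i)); rewrite -sum1_card big_mkcond [X in (_ <= X)%N]big_mkcond.
apply: leq_sum => e _.
by rewrite !inE; case: (e \in coverset C S); case: (e \in C i); case: (e \in P).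
Qed.

Lemma packing_card_le S P : is_set_packing C P ->
  (#|P| <= #|S| + #|~: coverset C S|)%N.
Proof.
move=> packP; rewrite -(cardsID (coverset C S) P) leq_add //.
  by rewrite setIC card_coverset_packing.
by rewrite subset_leq_card ?subsetDr.
Qed.

Definition private_cover S u := coverset C S :\: coverset C (S :\ u).

Lemma private_cover_owner S u i e :
  e \in private_cover S u -> i \in S -> e \in C i -> i = u.
Proof.
rewrite inE => /andP[eN _] iS ei; apply/eqP; apply: contraNT eN => iu.
by apply/bigcupP; exists i; rewrite // !inE iu.
Qed.

Lemma private_cover_disjoint S u w : u != w ->
  [disjoint private_cover S u & private_cover S w].
Proof.
move=> uw; apply/pred0P => e /=; apply/negbTE/negP => /andP[eu ew].
have /bigcupP[i iS ei] : e \in coverset C S by move: eu; rewrite inE => /andP[].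
by move: uw; rewrite -(private_cover_owner eu iS ei) -(private_cover_owner ew iS ei) eqxx.
Qed.

Lemma private_cover_notin S u : u \notin S -> private_cover S u = set0.
Proof.
move=> uS; rewrite /private_cover; have -> : S :\ u = S.
  by apply/setP => i; rewrite !inE andb_idl // => iS; apply: contraNneq uS => <-.
exact: setDv.
Qed.

Variable R : realFieldType.

Lemma sum_private_cover_le S (q : E -> R) : (forall e, 0 <= q e) ->
  \sum_(u in S) \sum_(e in private_cover S u) q e <= \sum_(e in coverset C S) q e.
Proof.
move=> q_ge0.
have -> : \sum_(u in S) \sum_(e in private_cover S u) q e
        = \sum_u \sum_(e in private_cover S u) q e.
  rewrite [RHS](bigID (fun u => u \in S)) /= [X in _ + X]big1 ?addr0 // => u uS.
  by rewrite private_cover_notin ?big_set0.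
rewrite -partition_disjoint_bigcup; last exact: private_cover_disjoint.
by apply: sum_subset_le => //; apply/bigcupsP => u _; apply: subsetDl.
Qed.

End CoversAndPackings.

Section Game.
Variables (R : realFieldType) (V E : finType) (C : V -> {set E}).
Implicit Types (S : {set V}) (T : {set E}) (e : E).
Local Notation strat1 := {ffun {set V} -> R}.
Local Notation strat2 := {ffun {set E} -> R}.

Definition cover_prob (s1 : strat1) e := \sum_(S : {set V} | e \in coverset C S) s1 S.
Definition attack_prob (s2 : strat2) e := \sum_(T : {set E} | e \in T) s2 T.
Definition defense_value (s2 : strat2) S := \sum_(e in coverset C S) attack_prob s2 e.
Definition attack_value (s1 : strat1) T := \sum_(e in T) (1 - cover_prob s1 e).
Definition expected_size (s2 : strat2) := \sum_T s2 T * #|T|%:R.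

Lemma U1_defense_value (s1 : strat1) (s2 : strat2) :
  U1 C s1 s2 = \sum_S s1 S * defense_value s2 S.
Proof.
rewrite /U1; apply: eq_bigr => S _.
rewrite /defense_value -(sum_mul_card_setI s2 (fun T => T)) big_distrr /=.
by apply: eq_bigr => T _; rewrite mulrA.
Qed.

Lemma expected_size_attack_prob (s2 : strat2) : expected_size s2 = \sum_e attack_prob s2 e.
Proof.
transitivity (\sum_T s2 T * #|[set: E] :&: T|%:R).
  by apply: eq_bigr => T _; rewrite setTI.
by rewrite sum_mul_card_setI; apply: eq_bigl => e; rewrite in_setT.
Qed.

Lemma sum_cover_prob (s1 : strat1) T :
  \sum_(e in T) cover_prob s1 e = \sum_S s1 S * #|T :&: coverset C S|%:R.
Proof. by rewrite sum_mul_card_setI. Qed.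

Lemma U2_attack_value (s1 : strat1) (s2 : strat2) : \sum_S s1 S = 1 ->
  U2 C s1 s2 = \sum_T s2 T * attack_value s1 T.
Proof.
move=> s1_sum1; rewrite /U2 exchange_big; apply: eq_bigr => T _ /=.
transitivity (s2 T * \sum_S (s1 S * #|T|%:R - s1 S * #|T :&: coverset C S|%:R)).
  by rewrite big_distrr; apply: eq_bigr => S _; rewrite /Fdet setIC /=; ring.
rewrite sumrB -big_distrl /= s1_sum1 mul1r.
by rewrite /attack_value sumrB sumr_const sum_cover_prob -[_ *+ _]mulr_natl mulr1.
Qed.

Lemma U1_add_U2 (s1 : strat1) (s2 : strat2) : \sum_S s1 S = 1 ->
  U1 C s1 s2 + U2 C s1 s2 = expected_size s2.
Proof.
move=> s1_sum1; rewrite /U1 /U2 -big_split /=.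
transitivity (\sum_S s1 S * expected_size s2); last by rewrite -big_distrl /= s1_sum1 mul1r.
apply: eq_bigr => S _; rewrite -big_split big_distrr /=; apply: eq_bigr => T _.
ring.
Qed.

Lemma attack_prob_ge0 b (s2 : strat2) : mixed2 b s2 -> forall e, 0 <= attack_prob s2 e.
Proof. by case=> s2_ge0 _ _ e; apply: prob_ge0. Qed.

Lemma cover_prob_le1 b (s1 : strat1) e : mixed1 b s1 -> cover_prob s1 e <= 1.
Proof. by case=> s1_ge0 s1_sum1 _; apply: prob_le1. Qed.

Section NashEquilibrium.
Variables (b1 b2 : nat) (s1 : strat1) (s2 : strat2).
Hypothesis NE : is_NE C b1 b2 s1 s2.

Let mixed_s1 : mixed1 b1 s1. Proof. by case: NE. Qed.
Let mixed_s2 : mixed2 b2 s2. Proof. by case: NE. Qed.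
Let s1_ge0 S : 0 <= s1 S. Proof. by case: mixed_s1. Qed.
Let s2_ge0 T : 0 <= s2 T. Proof. by case: mixed_s2. Qed.
Let s1_sum1 : \sum_S s1 S = 1. Proof. by case: mixed_s1. Qed.
Let s2_sum1 : \sum_T s2 T = 1. Proof. by case: mixed_s2. Qed.

Lemma ne_defense_le S : (#|S| <= b1)%N -> defense_value s2 S <= U1 C s1 s2.
Proof.
move=> Sb; rewrite -(expect_dirac S (defense_value s2)) -U1_defense_value.
by case: NE => _ _ br1 _; apply/br1/mixed_dirac.
Qed.

Lemma ne_attack_le T : (#|T| <= b2)%N -> attack_value s1 T <= U2 C s1 s2.
Proof.
move=> Tb; rewrite -(expect_dirac T (attack_value s1)) -U2_attack_value //.
by case: NE => _ _ _ br2; apply/br2/mixed_dirac.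
Qed.

Lemma ne_defense_support S : s1 S != 0 -> defense_value s2 S = U1 C s1 s2.
Proof.
apply: (expect_max_support s1_ge0 s1_sum1); last by rewrite U1_defense_value.
by move=> S' /(mixed_support_card mixed_s1); apply: ne_defense_le.
Qed.

Lemma ne_attack_support T : s2 T != 0 -> attack_value s1 T = U2 C s1 s2.
Proof.
apply: (expect_max_support s2_ge0 s2_sum1); last by rewrite U2_attack_value.
by move=> T' /(mixed_support_card mixed_s2); apply: ne_attack_le.
Qed.

Lemma ne_U2_ge0 : 0 <= U2 C s1 s2.
Proof.
apply: le_trans (ne_attack_le (T := set0) _); last by rewrite cards0.
by rewrite /attack_value big_set0.
Qed.

Lemma ne_short_attack_sure_cover T0 e : s2 T0 != 0 -> (#|T0| < b2)%N ->
  e \notin T0 -> cover_prob s1 e = 1.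
Proof.
move=> T0s T0b eT0; apply/eqP; rewrite eq_le (cover_prob_le1 _ mixed_s1) /= -subr_le0.
have := ne_attack_le (T := e |: T0); rewrite cardsU1 eT0 add1n => /(_ T0b).
by rewrite -(ne_attack_support T0s) /attack_value big_setU1 //= gerDr.
Qed.

(* Edges outside the short attack [T0] are worthless to the attacker while [d]
   is not; so a supported attack missing [d] would gain by keeping only its
   part inside [T0] and adding [d], which still fits in the budget. *)
Lemma ne_uncovered_sure_attack T0 S0 d : s2 T0 != 0 -> (#|T0| < b2)%N ->
  s1 S0 != 0 -> d \notin coverset C S0 -> attack_prob s2 d = 1.
Proof.
move=> T0s T0b S0s dS0.
have gd_gt0 : 0 < 1 - cover_prob s1 d.
  by rewrite subr_gt0; apply: (prob_lt1 s1_ge0 s1_sum1 S0s).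
apply: (prob_eq1 s2_sum1) => T Ts; apply: contraLR gd_gt0 => dT.
have restrict : attack_value s1 (T :&: T0) = attack_value s1 T.
  rewrite /attack_value [RHS](big_setID T0) /= [X in _ + X]big1 ?addr0 // => e.
  by rewrite inE => /andP[eT0 _]; rewrite (ne_short_attack_sure_cover T0s) ?subrr.
have : attack_value s1 (d |: (T :&: T0)) <= U2 C s1 s2.
  apply: ne_attack_le; rewrite cardsU1.
  by apply: leq_trans (leq_add (leq_b1 _) (subset_leq_card (subsetIr T T0))) _; rewrite add1n.
rewrite /attack_value big_setU1 /=; last by rewrite inE (negbTE dT).
by rewrite -/(attack_value s1 _) restrict (ne_attack_support Ts) gerDr -leNgt.
Qed.

(* Swapping [u] out of a supported defense [S0] for a vertex [v] watching the
   surely attacked edge [d] gains [d] and loses at most the private cover of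
   [u]; optimality of [S0] makes the loss at least 1. *)
Lemma ne_private_cover_mass S0 d v u : s1 S0 != 0 -> d \notin coverset C S0 ->
  d \in C v -> attack_prob s2 d = 1 -> u \in S0 ->
  1 <= \sum_(e in private_cover C S0 u) attack_prob s2 e.
Proof.
move=> S0s dS0 dv qd1 uS0.
have vS0 : v \notin S0 by apply: contra dS0 => vS0; apply/bigcupP; exists v.
have swap_le : defense_value s2 (v |: (S0 :\ u)) <= defense_value s2 S0.
  rewrite (ne_defense_support S0s); apply: ne_defense_le.
  rewrite cardsU1 !inE negb_and vS0 orbT add1n.
  by move: (mixed_support_card mixed_s1 S0s); rewrite (cardsD1 u S0) uS0 add1n.
have rest_sub : coverset C (S0 :\ u) \subset coverset C S0.
  exact/coverset_sub/subD1set.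
have gain : d |: coverset C (S0 :\ u) \subset coverset C (v |: (S0 :\ u)).
  rewrite subUset sub1set coverset_sub ?subsetUr // andbT.
  by apply/bigcupP; exists v; rewrite ?setU11.
have dN : d \notin coverset C (S0 :\ u) by apply: contra dS0; apply: (subsetP rest_sub).
have := sum_subset_le (attack_prob_ge0 mixed_s2) gain.
rewrite big_setU1 //= qd1 => swap_ge.
move: swap_le; rewrite /defense_value [X in _ <= X](big_setID (coverset C (S0 :\ u))) /=.
by rewrite (setIidPr rest_sub) -/(private_cover C S0 u); lra.
Qed.

Lemma expected_size_le : expected_size s2 <= b2%:R.
Proof.
apply: (expect_le_support s2_ge0 s2_sum1) => T /(mixed_support_card mixed_s2).
by rewrite ler_nat.
Qed.

(* Charge every edge to a vertex of a minimum cover watching it. *)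
Lemma ne_U1_lower : (forall e, exists i, e \in C i) -> (b1 <= nstar C)%N ->
  b1%:R * expected_size s2 <= (nstar C)%:R * U1 C s1 s2.
Proof.
move=> hcov b1n; have [K coverK cardK] := nstar_attained hcov.
have [f fP] := cover_choice coverK.
pose load k := \sum_(e | f e == k) attack_prob s2 e.
have sum_load (B : {set V}) : \sum_(k in B) load k = \sum_(e | f e \in B) attack_prob s2 e.
  rewrite (partition_big f (mem B)) //=; apply: eq_bigr => k kB; apply: eq_bigl => e.
  by case: eqP => [->|]; rewrite ?kB ?andbF.
have load_K : \sum_(k in K) load k = expected_size s2.
  by rewrite sum_load expected_size_attack_prob; apply: eq_bigl => e; have [] := fP e.
have load_le (B : {set V}) : \sum_(k in B) load k <= defense_value s2 B.
  rewrite sum_load /defense_value big_mkcond [X in _ <= X]big_mkcond /=.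
  apply: ler_sum => e _; case: ifP => feB; case: ifP => // eB.
    by case/negP: (negbT eB); apply/bigcupP; exists (f e); [|have [] := fP e].
  exact: (attack_prob_ge0 mixed_s2 e).
have [|B [_ cardB avgB]] := @subset_average_ge _ _ load b1 K; first by rewrite cardK.
move: avgB; rewrite cardK load_K => /le_trans; apply.
rewrite ler_wpM2l // (le_trans (load_le B)) // ne_defense_le ?cardB //.
Qed.

(* Each admissible defense watches at most [b1] edges of a maximum packing,
   so at least [m* - b1] of its mass is left unwatched. *)
Lemma ne_U2_lower : (b2 <= mstar C)%N ->
  b2%:R * ((mstar C)%:R - b1%:R) <= (mstar C)%:R * U2 C s1 s2.
Proof.
move=> b2m; have [P packP cardP] := mstar_attained C.
have P_covered : \sum_(e in P) cover_prob s1 e <= b1%:R.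
  rewrite sum_cover_prob; apply: (expect_le_support s1_ge0 s1_sum1).
  move=> S /(mixed_support_card mixed_s1) Sb.
  by rewrite ler_nat setIC (leq_trans (card_coverset_packing _ packP)).
have [|B [_ cardB avgB]] := @subset_average_ge _ _ (fun e => 1 - cover_prob s1 e) b2 P.
  by rewrite cardP.
have B_le : \sum_(e in B) (1 - cover_prob s1 e) <= U2 C s1 s2.
  by apply: ne_attack_le; rewrite cardB.
move: avgB; rewrite sumrB sumr_const cardP -[_ *+ _]mulr_natl mulr1 => avgB.
apply: le_trans (le_trans avgB _); last by rewrite ler_wpM2l.
by rewrite ler_wpM2l // lerD2l lerN2.
Qed.

Hypotheses (hcov : forall e, exists i, e \in C i)
  (b1_lt_nstar : (b1 < nstar C)%N) (b2_lt_mstar : (b2 < mstar C)%N).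

(* If a supported attack were short, every edge missed by a supported defense
   [S0] would be attacked surely and [S0] would have to cover an attack mass
   of at least [#|S0|]; then [E|T|] would reach [m*] by the packing bound. *)
Lemma ne_attack_support_card T0 : s2 T0 != 0 -> #|T0| = b2.
Proof.
move=> T0s; apply/eqP; rewrite eqn_leq (mixed_support_card mixed_s2 T0s) leqNgt /=.
apply/negP => T0b.
have [S0 S0s] := support_exists s1_sum1.
have [d dS0] := exists_uncovered (leq_ltn_trans (mixed_support_card mixed_s1 S0s) b1_lt_nstar).
have [v dv] := hcov d.
have sure_attack e : e \notin coverset C S0 -> attack_prob s2 e = 1.
  exact: ne_uncovered_sure_attack T0s T0b S0s.
have covered_mass : #|S0|%:R <= \sum_(e in coverset C S0) attack_prob s2 e.
  rewrite -sum1_card natr_sum.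
  apply: le_trans (sum_private_cover_le C S0 (attack_prob_ge0 mixed_s2)).
  by apply: ler_sum => u uS0; apply: ne_private_cover_mass S0s dS0 dv (sure_attack _ dS0) uS0.
have uncovered_mass :
    \sum_(e | e \notin coverset C S0) attack_prob s2 e = #|~: coverset C S0|%:R.
  by rewrite -sum1_card natr_sum; apply: eq_big => e; rewrite ?inE // => /sure_attack.
have [P packP cardP] := mstar_attained C.
have : (mstar C)%:R <= expected_size s2.
  apply: le_trans (_ : (#|S0| + #|~: coverset C S0|)%:R <= _).
    by rewrite -cardP ler_nat packing_card_le.
  rewrite natrD expected_size_attack_prob (bigID (fun e => e \in coverset C S0)) /=.
  by rewrite uncovered_mass lerD2r.
move=> mstar_le; have := le_trans mstar_le expected_size_le.
by rewrite ler_nat leqNgt b2_lt_mstar.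
Qed.

Lemma ne_expected_size : expected_size s2 = b2%:R.
Proof. by apply: (expect_const_support s2_sum1) => T /ne_attack_support_card ->. Qed.

Lemma ne_detection_rate : detection_rate C s1 s2 = U1 C s1 s2 / b2%:R.
Proof.
rewrite /detection_rate /U1 mulr_suml; apply: eq_bigr => S _.
rewrite mulr_suml; apply: eq_bigr => T _.
have [->|Ts] := eqVneq (s2 T) 0; first by rewrite mulr0 !mul0r.
by rewrite ne_attack_support_card // mulrA.
Qed.

End NashEquilibrium.

Lemma ne_U2_unique b1 b2 (s1 t1 : strat1) (s2 t2 : strat2) :
  is_NE C b1 b2 s1 s2 -> is_NE C b1 b2 t1 t2 -> U2 C s1 s2 = U2 C t1 t2.
Proof.
move=> [ms1 ms2 br1s br2s] [mt1 mt2 br1t br2t].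
have [[_ s1_sum1 _] [_ t1_sum1 _]] := (ms1, mt1).
have U2E (x : strat1) y : \sum_S x S = 1 -> U2 C x y = expected_size y - U1 C x y.
  by move=> x_sum1; rewrite -(U1_add_U2 y x_sum1) addrC addKr.
apply/eqP; rewrite eq_le; apply/andP; split.
- apply: (le_trans _ (br2t _ ms2)); by rewrite !U2E // lerD2l lerN2 (br1s _ mt1).
- apply: (le_trans _ (br2s _ mt2)); by rewrite !U2E // lerD2l lerN2 (br1t _ ms1).
Qed.

End Game.

Lemma equilibrium_bounds (R : realFieldType) (n m x1 x2 u1 u2 : R) :
  0 < n -> 0 < m -> 0 < x2 -> u1 + u2 = x2 ->
  x1 * x2 <= n * u1 -> x2 * (m - x1) <= m * u2 -> 0 <= u2 ->
  [/\ x1 * x2 / n <= u1, u1 <= Num.min (x1 * x2 / m) x2,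
      Num.max 0 (x2 * (1 - x1 / m)) <= u2 & u2 <= x2 * (1 - x1 / n)] /\
  (x1 / n <= u1 / x2 /\ u1 / x2 <= Num.min (x1 / m) 1).
Proof.
move=> n_gt0 m_gt0 x2_gt0 sum_u u1_ge u2_ge u2_ge0.
have u1_le_m : u1 <= x1 * x2 / m by rewrite ler_pdivlMr //; nra.
have u1_le : u1 <= x2 by lra.
have u1_ge_n : x1 * x2 / n <= u1 by rewrite ler_pdivrMr // [u1 * _]mulrC.
have -> : x2 * (1 - x1 / m) = x2 * (m - x1) / m by field; apply: lt0r_neq0.
have -> : x2 * (1 - x1 / n) = x2 * (n - x1) / n by field; apply: lt0r_neq0.
rewrite le_min ge_max le_min u1_ge_n u1_le_m u1_le u2_ge0 /=.
rewrite ler_pdivrMr // ler_pdivlMr // [u2 * m]mulrC u2_ge.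
have -> : u2 * n = x2 * n - n * u1 by rewrite -sum_u; ring.
have -> : x2 * (n - x1) = x2 * n - x1 * x2 by ring.
rewrite lerD2l lerN2 u1_ge ler_pdivlMr // !ler_pdivrMr // mul1r u1_le andbT.
by rewrite [x1 / n * _]mulrAC [x1 / m * _]mulrAC u1_ge_n u1_le_m.
Qed.

Theorem theorem1 (R : realFieldType) (V E : finType) (C : V -> {set E})
    (b1 b2 : nat)
    (hV : (0 < #|V|)%N) (hE : (0 < #|E|)%N)
    (hcov : forall e : E, exists i : V, e \in C i)
    (hb1 : (0 < b1)%N) (hb2 : (0 < b2)%N)
    (hb1n : (b1 < nstar C)%N) (hb2m : (b2 < mstar C)%N) :
  (forall (s1 t1 : {ffun {set V} -> R}) (s2 t2 : {ffun {set E} -> R}),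
      is_NE C b1 b2 s1 s2 -> is_NE C b1 b2 t1 t2 ->
      [/\ U1 C s1 s2 = U1 C t1 t2, U2 C s1 s2 = U2 C t1 t2 &
          detection_rate C s1 s2 = detection_rate C t1 t2])
  /\
  (forall (s1 : {ffun {set V} -> R}) (s2 : {ffun {set E} -> R}),
      is_NE C b1 b2 s1 s2 ->
      [/\ (b1 * b2)%:R / (nstar C)%:R <= U1 C s1 s2,
          U1 C s1 s2 <= Num.min ((b1 * b2)%:R / (mstar C)%:R) (b2%:R : R),
          Num.max 0 (b2%:R * (1 - b1%:R / (mstar C)%:R)) <= U2 C s1 s2 &
          U2 C s1 s2 <= b2%:R * (1 - b1%:R / (nstar C)%:R)] /\
      (b1%:R / (nstar C)%:R <= detection_rate C s1 s2 /\
          detection_rate C s1 s2 <= Num.min (b1%:R / (mstar C)%:R) 1)).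
Proof.
have U_sum s1 s2 : is_NE C b1 b2 s1 s2 -> U1 C s1 s2 + U2 C s1 s2 = b2%:R.
  move=> NE; rewrite -(ne_expected_size NE hcov hb1n hb2m) U1_add_U2 //.
  by case: NE => -[].
split=> [s1 t1 s2 t2 NEs NEt | s1 s2 NE].
  have eU2 := ne_U2_unique NEs NEt.
  have eU1 : U1 C s1 s2 = U1 C t1 t2.
    by apply: (addIr (U2 C s1 s2)); rewrite U_sum // eU2 U_sum.
  by rewrite !(ne_detection_rate _ hcov hb1n hb2m) // eU1.
have U1_ge := ne_U1_lower NE hcov (ltnW hb1n).
rewrite (ne_expected_size NE hcov hb1n hb2m) in U1_ge.
rewrite !natrM (ne_detection_rate NE hcov hb1n hb2m).
apply: equilibrium_bounds; rewrite ?ltr0n ?U_sum //.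
- exact: leq_ltn_trans hb1n.
- exact: leq_ltn_trans hb2m.
- exact: ne_U2_lower NE (ltnW hb2m).
- exact: ne_U2_ge0 NE.
Qed.
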